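(* For every Johnson graph $J(m,k)$ (with $m,k\in\mathbb N$, $k\le m$), the VC-dimension of the edge relation on $J(m,k)$ is at most $4$.
   Context: For $m\ge k$ and a set $X$ with $|X|=m$, the Johnson graph $J(m,k)$ has as vertices the $k$-element subsets of $X$, two vertices adjacent iff their intersection has size $k-1$. The VC-dimension of the edge relation on a graph $G$ is the VC-dimension of the set system $(V(G),\{N(v)\mid v\in V(G)\})$, where $N(v)$ is the set of vertices adjacent to $v$; i.e. the largest size of a set $A\subseteq V(G)$ such that $\{A\cap N(v)\mid v\in V(G)\}$ equals the power set of $A$. *)

From mathcomp Require Import all_boot.
Set Implicit Arguments. Unset Strict Implicit. Unset Printing Implicit Defensive.

Definition johnson_vertex (m k : nat) := {A : {set 'I_m} | #|A| == k}.

(* Adjacency in J(m,k): intersection has size k-1 (written |A ∩ B| + 1 = k,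
   so that nothing is adjacent when k = 0). *)
Definition johnson_adj (m k : nat) : rel (johnson_vertex m k) :=
  fun u v => (#|val u :&: val v|).+1 == k.

Definition nbhd (T : finType) (e : rel T) (v : T) : {set T} := [set w | e v w].

Definition shattered (T : finType) (e : rel T) (A : {set T}) : Prop :=
  [set A :&: nbhd e v | v in [set: T]] = powerset A.

Definition vc_dim_le (T : finType) (e : rel T) (d : nat) : Prop :=
  forall A : {set T}, shattered e A -> #|A| <= d.

From mathcomp Require Import all_boot zify.
Set Implicit Arguments. Unset Strict Implicit. Unset Printing Implicit Defensive.

(* If five vertices a_0, ..., a_4 were shattered, some vertex V would be
   adjacent to all of them, so a_i = V - x_i + y_i with x_i in V, y_i outside
   V, and the pairs (x_i, y_i) distinct.  A vertex W with d = |V \ W| is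
   adjacent to a_i iff [x_i \notin W] + [y_i \in W] = d, and the x_i missing
   from W, like the y_i in W, take at most d values.  Hence the trace of N(W)
   on {a_i} only depends on the equality patterns of (x_i) and of (y_i), which
   are set partitions of five points, and on a choice of at most d classes of
   each (nothing is adjacent when d > 2).  Evaluating all 52 x 52 pairs of
   patterns shows that some subset of {a_i} is never a trace. *)

Section Swaps.
Variable T : finType.
Implicit Types (V U W : {set T}) (x y : T).

Lemma card_setI_swap V W x y : x \in V -> y \notin V ->
  #|W :&: (y |: V :\ x)| + (x \in W) = #|W :&: V| + (y \in W).
Proof.
move=> xV yV; rewrite (cardsD1 y) (cardsD1 x (W :&: V)) !inE eqxx xV /= andbT.
have -> : W :&: (y |: V :\ x) :\ y = W :&: V :\ x.
  apply/setP => z; rewrite !inE; case: (eqVneq z y) => [->|_] /=.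
    by rewrite (negbTE yV) !andbF.
  by rewrite andbCA.
by rewrite andbT; lia.
Qed.

Lemma swap_of_card_setI V U : #|U| = #|V| -> (#|V :&: U|).+1 = #|V| ->
  exists x y, [/\ x \in V, y \notin V & U = y |: V :\ x].
Proof.
move=> UV VU.
have /cards1P[x Dx] : #|V :\: U| == 1 by have := cardsID U V; lia.
have /cards1P[y Dy] : #|U :\: V| == 1 by have := cardsID V U; rewrite setIC; lia.
have xV : x \in V by have := set11 x; rewrite -Dx inE => /andP[].
have yV : y \notin V by have := set11 y; rewrite -Dy inE => /andP[].
exists x, y; split=> //; apply/setP => z; rewrite !inE.
move/setP/(_ z): Dx; move/setP/(_ z): Dy.
by rewrite !inE; case: (z \in U); case: (z \in V); case: eqP; case: eqP.
Qed.

Lemma swap_adjE V W x y : x \in V -> y \notin V ->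
  (#|W :&: (y |: V :\ x)|.+1 == #|V|) = ((x \in V :\: W) + (y \in W :\: V) == #|V :\: W|).
Proof.
move=> xV yV; have := card_setI_swap W xV yV; have := cardsID W V.
rewrite !inE xV (negbTE yV) andbT setIC.
by case: (x \in W); case: (y \in W) => /= E1 E2; apply/eqP/eqP; lia.
Qed.

End Swaps.

Fixpoint words (T : Type) (alphabet : seq T) (n : nat) : seq (seq T) :=
  if n is n'.+1 then [seq x :: w | x <- alphabet, w <- words alphabet n'] else [:: [::]].

Lemma mem_words (T : eqType) (alphabet : seq T) n w :
  (w \in words alphabet n) = (size w == n) && all (mem alphabet) w.
Proof.
elim: n w => [|n IHn] [|x w] //=; rewrite ?inE //.
  by apply/negbTE/negP => /allpairsP[[? ?] []].
apply/allpairsP/and3P => [[[x' w'] /= [x'a]] | [sz xa aw]].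
  by rewrite IHn => /andP[/eqP <- w'a] [-> ->]; rewrite eqxx x'a w'a.
by exists (x, w); rewrite IHn -eqSS sz aw.
Qed.

Lemma size_undup_map_eq (A B C : eqType) (f : A -> B) (g : A -> C) s :
  {in s &, forall i j, (f i == f j) = (g i == g j)} ->
  size (undup (map f s)) = size (undup (map g s)).
Proof.
elim: s => [|a s IHs] //= fg.
have a_s : a \in a :: s by rewrite inE eqxx.
have b_s b : b \in s -> b \in a :: s by rewrite inE => ->; rewrite orbT.
have -> : (f a \in map f s) = (g a \in map g s).
  apply/mapP/mapP => -[b bs /eqP fab]; exists b => //; apply/eqP.
    by rewrite -(fg a b) // b_s.
  by rewrite (fg a b) // b_s.
have {}IHs : size (undup (map f s)) = size (undup (map g s)).
  by apply: IHs => i j /b_s i_s /b_s j_s; apply: fg.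
by case: (g a \in map g s); rewrite /= IHs.
Qed.

Lemma prefix_choice (T : Type) (P : nat -> T -> Prop) n :
  (forall i, i <= n -> exists x, P i x) -> exists f : nat -> T, forall i, i <= n -> P i (f i).
Proof.
move=> exP; have [f Pf] := fin_all_exists (fun i : 'I_n.+1 => exP i (ltn_ord i)).
by exists (fun i => f (inord i)) => i le_in; have := Pf (inord i); rewrite inordK.
Qed.

Lemma enum_nth_injective (T : finType) (A : {set T}) (x0 : T) n : n <= #|A| ->
  (forall i, i < n -> nth x0 (enum A) i \in A) /\ {in iota 0 n &, injective (nth x0 (enum A))}.
Proof.
rewrite cardE => le_nA; split=> [i ilt | i j].
  by rewrite -mem_enum mem_nth ?(leq_trans ilt).
rewrite !mem_iota !add0n => ilt jlt /eqP.
by rewrite nth_uniq ?enum_uniq ?(leq_trans ilt) ?(leq_trans jlt) // => /eqP.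
Qed.

Lemma shattered_realizes (T : finType) (e : rel T) (A : {set T}) (a : nat -> T) n :
  shattered e A -> (forall i, i < n -> a i \in A) -> {in iota 0 n &, injective a} ->
  forall S : seq bool, size S = n -> exists v, [seq e v (a i) | i <- iota 0 n] = S.
Proof.
move=> shA aA a_inj S sizeS.
pose B := [set u | u \in [seq a i | i <- iota 0 n & nth false S i]].
have : B \in powerset A.
  rewrite powersetE; apply/subsetP => u; rewrite inE => /mapP[i].
  by rewrite mem_filter mem_iota add0n => /andP[_ ilt] ->; apply: aA.
rewrite -shA => /imsetP[v _ Bv]; exists v.
rewrite -[RHS](mkseq_nth false) sizeS; apply/eq_in_map => i iI.
have aiA : a i \in A by apply: aA; move: iI; rewrite mem_iota.
have -> : e v (a i) = (a i \in B) by rewrite Bv !inE aiA.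
rewrite inE; apply/mapP/idP => [[j] | Si]; last by exists i; rewrite // mem_filter Si.
by rewrite mem_filter => /andP[Sj jI] /a_inj ->.
Qed.

Definition I5 := iota 0 5.

Section Patterns.
Variable T : eqType.
Implicit Types (f X : nat -> T) (mark : seq bool).

Definition pattern X : seq nat := [seq find (fun j => X j == X i) I5 | i <- I5].

Lemma pattern_eq X i j : i < 5 -> j < 5 ->
  (nth 0 (pattern X) i == nth 0 (pattern X) j) = (X i == X j).
Proof.
move=> ilt jlt; rewrite !(nth_map 0) ?size_iota // !nth_iota // !add0n.
apply/eqP/eqP => [Efind | ->] //.
have has_self k : k < 5 -> has (fun j => X j == X k) I5.
  by move=> klt; apply/hasP; exists k; rewrite ?mem_iota.
have /eqP := nth_find 0 (has_self i ilt); have /eqP := nth_find 0 (has_self j jlt).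
by rewrite Efind => -> ->.
Qed.

Lemma pattern_in_words X : pattern X \in words I5 5.
Proof.
rewrite mem_words size_map size_iota eqxx; apply/allP => _ /mapP[i iI5 ->].
rewrite [mem I5 _]mem_iota add0n -(size_iota 0 5) -has_find.
by apply/hasP; exists i.
Qed.

(* A mark records which x_i lie in V \ W (or which y_i lie in W \ V) for a
   vertex W at distance d from V; it is constant on the classes of f and, as
   V \ W and W \ V have d elements, marks at most d classes. *)
Definition nclasses f mark : nat := size (undup [seq f i | i <- I5 & nth false mark i]).

Definition respects f mark : bool :=
  all (fun i => all (fun j => (f i == f j) ==> (nth false mark i == nth false mark j)) I5) I5.

Definition marks f d : seq (seq bool) :=
  [seq mark <- words [:: false; true] 5 | respects f mark && (nclasses f mark <= d)].

Definition mark_table f : seq (seq (seq bool)) := [seq marks f d | d <- iota 0 3].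

End Patterns.

Section PatternInvariance.
Variable T : eqType.
Implicit Types (X : nat -> T) (mark : seq bool).

Lemma nclasses_pattern X mark : nclasses (nth 0 (pattern X)) mark = nclasses X mark.
Proof.
apply: size_undup_map_eq => i j; rewrite !mem_filter !mem_iota !add0n.
by move=> /andP[_ ilt] /andP[_ jlt]; apply: pattern_eq.
Qed.

Lemma respects_pattern X mark : respects (nth 0 (pattern X)) mark = respects X mark.
Proof.
apply: eq_in_all => i; rewrite mem_iota add0n => ilt.
by apply: eq_in_all => j; rewrite mem_iota add0n => jlt; rewrite pattern_eq.
Qed.

Lemma marks_pattern X d : marks (nth 0 (pattern X)) d = marks X d.
Proof. by apply: eq_filter => mark; rewrite respects_pattern nclasses_pattern. Qed.

Lemma mark_table_pattern X : mark_table (nth 0 (pattern X)) = mark_table X.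
Proof. by apply: eq_map => d; apply: marks_pattern. Qed.

End PatternInvariance.

(* The 52 set partitions of five points. *)
Definition patterns : seq (seq nat) := undup [seq pattern (nth 0 w) | w <- words I5 5].

Lemma pattern_in_patterns (T : eqType) (X : nat -> T) : pattern X \in patterns.
Proof.
rewrite mem_undup; apply/mapP; exists (pattern X); first exact: pattern_in_words.
apply/eq_in_map => i; rewrite mem_iota add0n => ilt; apply: eq_in_find => j.
by rewrite mem_iota add0n => jlt; rewrite pattern_eq.
Qed.

Lemma mem_marks (T : finType) (f : nat -> T) (B : {set T}) d :
  #|B| <= d -> [seq f i \in B | i <- I5] \in marks f d.
Proof.
move=> Bd; have nthB i : i < 5 -> nth false [seq f i \in B | i <- I5] i = (f i \in B).
  by move=> ilt; rewrite (nth_map 0) ?size_iota // nth_iota.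
rewrite mem_filter mem_words size_map size_iota eqxx.
have -> : all (mem [:: false; true]) [seq f i \in B | i <- I5] by apply/allP => -[].
rewrite !andbT /respects; apply/andP; split.
  apply/allP => i; rewrite mem_iota add0n => ilt; apply/allP => j.
  by rewrite mem_iota add0n => jlt; rewrite !nthB //; apply/implyP => /eqP ->.
rewrite /nclasses (leq_trans _ Bd) //; set s := undup _.
have /card_uniqP <- : uniq s := undup_uniq _.
apply/subset_leq_card/subsetP => x; rewrite mem_undup => /mapP[i].
by rewrite mem_filter mem_iota add0n => /andP[+ ilt] ->; rewrite nthB.
Qed.

Definition swap_trace (d : nat) (out inn : seq bool) : seq bool :=
  [seq nth false out i + nth false inn i == d | i <- I5].

Definition traces (mx my : seq (seq (seq bool))) : seq (seq bool) :=
  flatten [seq [seq swap_trace d o n | o <- nth [::] mx d, n <- nth [::] my d]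
          | d <- iota 0 3].

Lemma mem_traces (T : eqType) (f g : nat -> T) d o n :
  d < 3 -> o \in marks f d -> n \in marks g d ->
  swap_trace d o n \in traces (mark_table f) (mark_table g).
Proof.
move=> dlt o_marks n_marks; apply/flatten_mapP; exists d; first by rewrite mem_iota.
rewrite !(nth_map 0) ?size_iota // nth_iota // add0n.
exact: allpairs_f.
Qed.

Definition pairs_distinct (f g : nat -> nat) : bool :=
  all (fun i => all (fun j => (i == j) || (f i != f j) || (g i != g j)) I5) I5.

(* The [let]s make evaluation compute the marks once per pattern and the
   traces once per pair of patterns. *)
Definition some_trace_missing (mx my : seq (seq (seq bool))) : bool :=
  let T := traces mx my in has (fun S => S \notin T) (words [:: false; true] 5).

Definition no_pattern_pair_shattered : bool :=
  let table := [seq (s, mark_table (nth 0 s)) | s <- patterns] in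
  all (fun px => all (fun py =>
    pairs_distinct (nth 0 px.1) (nth 0 py.1) ==> some_trace_missing px.2 py.2) table) table.

Lemma no_pattern_pair_shatteredP : no_pattern_pair_shattered.
Proof. by vm_compute. Qed.

Lemma swap_trace_in_traces (T : finType) (V W : {set T}) (X Y : nat -> T) :
  (forall i, i < 5 -> X i \in V) -> (forall i, i < 5 -> Y i \notin V) -> #|W| = #|V| ->
  [seq #|W :&: (Y i |: V :\ X i)|.+1 == #|V| | i <- I5] \in traces (mark_table X) (mark_table Y).
Proof.
move=> XV YV WV; set d := #|V :\: W|.
have WV_VW : #|W :\: V| = d by have := cardsID V W; have := cardsID W V; rewrite setIC WV; lia.
have -> : [seq #|W :&: (Y i |: V :\ X i)|.+1 == #|V| | i <- I5] =
    swap_trace d [seq X i \in V :\: W | i <- I5] [seq Y i \in W :\: V | i <- I5].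
  apply/eq_in_map => i; rewrite mem_iota add0n => ilt.
  by rewrite swap_adjE ?XV ?YV // !(nth_map 0) ?size_iota // !nth_iota.
have [d_small | d_large] := ltnP d 3.
  by apply: mem_traces => //; apply: mem_marks; rewrite ?WV_VW.
(* Beyond distance 2 nothing is adjacent, as for the empty marks at d = 2. *)
have -> : swap_trace d [seq X i \in V :\: W | i <- I5] [seq Y i \in W :\: V | i <- I5] =
    swap_trace 2 [seq X i \in set0 | i <- I5] [seq Y i \in set0 | i <- I5].
  apply/eq_in_map => i; rewrite mem_iota add0n => ilt.
  rewrite (ltn_eqF (leq_ltn_trans (leq_add (leq_b1 _) (leq_b1 _)) d_large)).
  by rewrite !(nth_map 0) ?size_iota // !inE.
by apply: mem_traces => //; apply: mem_marks; rewrite cards0.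
Qed.

Lemma some_swap_trace_missing (T : eqType) (X Y : nat -> T) :
  {in I5 &, injective (fun i => (X i, Y i))} ->
  exists2 S, S \in words [:: false; true] 5 & S \notin traces (mark_table X) (mark_table Y).
Proof.
move=> XYinj; have distinct : pairs_distinct (nth 0 (pattern X)) (nth 0 (pattern Y)).
  apply/allP => i iI5; apply/allP => j jI5; move: (iI5) (jI5).
  rewrite !mem_iota !add0n => ilt jlt; rewrite !pattern_eq // -orbA -negb_and.
  case: eqVneq => //= ij; apply/negP => /andP[/eqP Xij /eqP Yij].
  by case/eqP: ij; apply: XYinj; rewrite //= Xij Yij.
have := no_pattern_pair_shatteredP; rewrite /no_pattern_pair_shattered.
move/allP/(_ _ (map_f (fun s => (s, mark_table (nth 0 s))) (pattern_in_patterns X))).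
move/allP/(_ _ (map_f (fun s => (s, mark_table (nth 0 s))) (pattern_in_patterns Y))).
by rewrite /= distinct !mark_table_pattern => /hasP.
Qed.

Lemma swap_family_not_shattered (T : finType) (V : {set T}) (X Y : nat -> T) :
  (forall i, i < 5 -> X i \in V) -> (forall i, i < 5 -> Y i \notin V) ->
  {in I5 &, injective (fun i => (X i, Y i))} ->
  exists2 S : seq bool, size S = 5 & forall W : {set T}, #|W| = #|V| ->
    [seq #|W :&: (Y i |: V :\ X i)|.+1 == #|V| | i <- I5] != S.
Proof.
move=> XV YV /some_swap_trace_missing[S]; rewrite mem_words => /andP[/eqP sizeS _] S_missing.
exists S => // W WV; apply: contraNneq S_missing => <-.
exact: swap_trace_in_traces.
Qed.

Section JohnsonSwaps.
Variables m k : nat.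
Implicit Types (u v : johnson_vertex m k).

Lemma card_johnson_vertex v : #|val v| = k.
Proof. exact/eqP/(valP v). Qed.

Lemma johnson_adj_swap v u : johnson_adj v u ->
  exists x y, [/\ x \in val v, y \notin val v & val u = y |: val v :\ x].
Proof.
by move=> /eqP vu; apply: swap_of_card_setI; rewrite ?card_johnson_vertex.
Qed.

Lemma johnson_common_neighbour_swaps v (a : nat -> johnson_vertex m k) n :
  (forall i, i <= n -> johnson_adj v (a i)) ->
  exists X Y : nat -> 'I_m, forall i, i <= n ->
    [/\ X i \in val v, Y i \notin val v & val (a i) = Y i |: val v :\ X i].
Proof.
move=> adj_v; have [X XP] := prefix_choice (fun i le_in => johnson_adj_swap (adj_v i le_in)).
have [Y XYP] := prefix_choice XP; by exists X, Y.
Qed.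

End JohnsonSwaps.

Theorem mainTheorem7 (m k : nat) (hkm : k <= m) :
  vc_dim_le (@johnson_adj m k) 4.
Proof.
move=> A shA; rewrite leqNgt; apply/negP => A_large.
have [v0 _] : exists v0, v0 \in A by apply/card_gt0P; lia.
pose a := nth v0 (enum A); have [aA a_inj] := enum_nth_injective v0 A_large.
have realize := shattered_realizes shA aA a_inj.
have [v adj_v] := realize (nseq 5 true) erefl.
have {}adj_v i : i <= 4 -> johnson_adj v (a i).
  move=> ile; have := congr1 (nth false ^~ i) adj_v.
  by rewrite (nth_map 0) ?size_iota // nth_iota // nth_nseq (ile : i < 5).
have [X [Y XY]] := johnson_common_neighbour_swaps adj_v.
have [] := swap_family_not_shattered (V := val v) (X := X) (Y := Y).
- by move=> i /XY[].
- by move=> i /XY[].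
- move=> i j; rewrite !mem_iota !add0n => ilt jlt [Xij Yij]; apply: a_inj; rewrite ?mem_iota //.
  by apply: val_inj; have [_ _ ->] := XY i ilt; have [_ _ ->] := XY j jlt; rewrite Xij Yij.
move=> S sizeS S_missing; have [w wS] := realize S sizeS.
have := S_missing (val w); rewrite !card_johnson_vertex => /(_ erefl)/negP[].
rewrite -wS; apply/eqP/eq_in_map => i; rewrite mem_iota add0n => ilt.
by have [_ _ <-] := XY i ilt.
Qed.
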